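(* Let $\mathcal H=\mathbb C^2$ with basis $I=\{|0\rangle,|1\rangle\}$ (the $\sigma_z$ eigenbasis), and let $\rho=\frac12(\mathbb 1+n_x\sigma_x+n_y\sigma_y+n_z\sigma_z)$ be any qubit density matrix ($n_x^2+n_y^2+n_z^2\le1$). Define $C_z(\rho)=\sqrt{n_x^2+n_y^2}$. Then $$R_I(\rho)=h\!\left(\frac{1+\sqrt{1-C_z(\rho)^2}}{2}\right),$$ where $h(p)=-p\log_2p-(1-p)\log_2(1-p)$ is the binary entropy. Moreover $C_z(\rho)=|\sqrt{\eta_1}-\sqrt{\eta_2}|$, where $\eta_1,\eta_2$ are the eigenvalues of $\rho\,\sigma_x\rho^*\sigma_x$ ($\rho^*$ the entrywise complex conjugate in basis $I$), and $C_z(\rho)=C_{l_1}(\rho):=|\langle0|\rho|1\rangle|+|\langle1|\rho|0\rangle|$.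
   Context: $\sigma_x,\sigma_y,\sigma_z$ are the Pauli matrices. For a density matrix $\rho$, let $\rho^{\mathrm{diag}}=\sum_i\langle i|\rho|i\rangle\,|i\rangle\langle i|$. For a pure state $|\psi\rangle=\sum_ia_i|i\rangle$ define $R_I(|\psi\rangle)=S\big((|\psi\rangle\langle\psi|)^{\mathrm{diag}}\big)=-\sum_i|a_i|^2\log_2|a_i|^2$, where $S$ is the von Neumann entropy. For a general density matrix $\rho$ define $R_I(\rho)=\min\sum_ep_eR_I(|\psi_e\rangle)$, the minimum over all finite pure-state decompositions $\rho=\sum_ep_e|\psi_e\rangle\langle\psi_e|$ with $p_e>0$, $\sum_ep_e=1$. *)

From Stdlib Require Import Reals Lra List.
Open Scope R_scope.

Definition Cx : Type := (R * R)%type.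
Definition Cre (z : Cx) : R := fst z.
Definition Cim (z : Cx) : R := snd z.
Definition RtoC (x : R) : Cx := (x, 0).
Definition C0 : Cx := (0, 0).
Definition C1 : Cx := (1, 0).
Definition Ci : Cx := (0, 1).
Definition Cadd (z w : Cx) : Cx := (fst z + fst w, snd z + snd w).
Definition Copp (z : Cx) : Cx := (- fst z, - snd z).
Definition Csub (z w : Cx) : Cx := Cadd z (Copp w).
Definition Cmul (z w : Cx) : Cx :=
  (fst z * fst w - snd z * snd w, fst z * snd w + snd z * fst w).
Definition Cconj (z : Cx) : Cx := (fst z, - snd z).
Definition Cnorm2 (z : Cx) : R := fst z * fst z + snd z * snd z.
Definition Cnorm (z : Cx) : R := sqrt (Cnorm2 z).

(* ---------- qubit vectors and 2x2 matrices (index false = |0>, true = |1>) ---------- *)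
Definition Vec2 : Type := bool -> Cx.
Definition Mat2 : Type := bool -> bool -> Cx.

Definition madd (A B : Mat2) : Mat2 := fun i j => Cadd (A i j) (B i j).
Definition mscale (c : Cx) (A : Mat2) : Mat2 := fun i j => Cmul c (A i j).
Definition mmul (A B : Mat2) : Mat2 :=
  fun i j => Cadd (Cmul (A i false) (B false j)) (Cmul (A i true) (B true j)).
Definition mconj (A : Mat2) : Mat2 := fun i j => Cconj (A i j).
Definition mid : Mat2 := fun i j => if Bool.eqb i j then C1 else C0.
Definition mdet (A : Mat2) : Cx :=
  Csub (Cmul (A false false) (A true true)) (Cmul (A false true) (A true false)).

Definition sigma_x : Mat2 := fun i j => if Bool.eqb i j then C0 else C1.
Definition sigma_y : Mat2 := fun i j =>
  match i, j with
  | false, true => Copp Ci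
  | true, false => Ci
  | _, _ => C0
  end.
Definition sigma_z : Mat2 := fun i j =>
  match i, j with
  | false, false => C1
  | true, true => Copp C1
  | _, _ => C0
  end.

Definition bloch (nx ny nz : R) : Mat2 :=
  mscale (RtoC (1/2))
    (madd mid (madd (mscale (RtoC nx) sigma_x)
                (madd (mscale (RtoC ny) sigma_y) (mscale (RtoC nz) sigma_z)))).

Definition log2 (x : R) : R := ln x / ln 2.
Definition negxlogx (x : R) : R := if Rle_dec x 0 then 0 else - (x * log2 x).
Definition h (p : R) : R := negxlogx p + negxlogx (1 - p).

(* R_I(|psi>) = S((|psi><psi|)^diag) = - sum_i |a_i|^2 log2 |a_i|^2 *)
Definition RI_pure (psi : Vec2) : R :=
  negxlogx (Cnorm2 (psi false)) + negxlogx (Cnorm2 (psi true)).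

Definition is_unit_vec (psi : Vec2) : Prop :=
  Cnorm2 (psi false) + Cnorm2 (psi true) = 1.

Definition ens_mat (d : list (R * Vec2)) : Mat2 := fun i j =>
  fold_right (fun e acc => Cadd (Cmul (RtoC (fst e)) (Cmul (snd e i) (Cconj (snd e j)))) acc)
             C0 d.

Definition is_decomposition (rho : Mat2) (d : list (R * Vec2)) : Prop :=
  (forall e, In e d -> 0 < fst e /\ is_unit_vec (snd e)) /\
  fold_right (fun e acc => fst e + acc) 0 d = 1 /\
  (forall i j, ens_mat d i j = rho i j).

Definition avg_RI (d : list (R * Vec2)) : R :=
  fold_right (fun e acc => fst e * RI_pure (snd e) + acc) 0 d.

Definition RI_is (rho : Mat2) (v : R) : Prop :=
  (exists d, is_decomposition rho d /\ avg_RI d = v) /\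
  (forall d, is_decomposition rho d -> v <= avg_RI d).

Definition Cz (nx ny nz : R) : R := sqrt (nx ^ 2 + ny ^ 2).

Definition Cl1 (rho : Mat2) : R := Cnorm (rho false true) + Cnorm (rho true false).

(* eta1, eta2 are the eigenvalues (with multiplicity) of A:
   det(lambda 1 - A) = (lambda - eta1)(lambda - eta2) for all lambda *)
Definition eigenpair (A : Mat2) (eta1 eta2 : Cx) : Prop :=
  forall lam : Cx,
    mdet (madd (mscale lam mid) (mscale (Copp C1) A)) = Cmul (Csub lam eta1) (Csub lam eta2).

(* A pure state with amplitudes [a_0, a_1] and bias [s = | |a_0|^2 - |a_1|^2 |] has
   [R_I = h ((1 + s) / 2)] and l1-coherence [c = 2 |a_0| |a_1| = sqrt (1 - s^2)].  As a
   function of [c], [F c = h ((1 + sqrt (1 - c^2)) / 2)] is convex and nondecreasing on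
   [0, 1]: its tangent slopes are [artanh s * sqrt (1 - s^2) / s], which decrease in [s].
   Since the off-diagonal entry of [rho] is the weighted sum of those of the pure states,
   every decomposition has average coherence at least [Cz], hence average [R_I] at least
   [F Cz].  Splitting [rho] along the [z] axis into the two pure states with transverse
   components [(nx, ny)] attains [F Cz]. *)

From Pilot Require Import Defs.
From Stdlib Require Import Reals Lra List.
From Coquelicot Require Import Hierarchy Derive AutoDerive.
From Coquelicot Require Complex.
Open Scope R_scope.

(** * The binary entropy as a function of the bias *)

Lemma MVT_open (f df : R -> R) (a b : R) : a < b ->
  (forall x, a < x < b -> is_derive f x (df x)) ->
  (forall x, a <= x <= b -> continuity_pt f x) ->
  exists c, a < c < b /\ f b - f a = df c * (b - a).
Proof.
  intros Hab Hd Hc.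
  assert (pr_f : forall c, a < c < b -> derivable_pt f c).
  { intros c Hc'. exists (df c). apply is_derive_Reals, Hd, Hc'. }
  assert (pr_id : forall c, a < c < b -> derivable_pt id c)
    by (intros; apply derivable_pt_id).
  destruct (MVT f id a b pr_f pr_id Hab Hc) as [c [Pc HMVT]].
  { intros; apply derivable_continuous_pt, derivable_pt_id. }
  exists c; split; [exact Pc|].
  rewrite (derive_pt_eq_0 f c (df c) (pr_f c Pc)) in HMVT
    by (apply is_derive_Reals, Hd, Pc).
  rewrite (derive_pt_eq_0 id c 1 (pr_id c Pc)) in HMVT by apply derivable_pt_lim_id.
  unfold id in HMVT. lra.
Qed.

Lemma continuity_pt_of_is_derive (f : R -> R) (x l : R) :
  is_derive f x l -> continuity_pt f x.
Proof. intros H. apply derivable_continuous_pt. exists l. now apply is_derive_Reals. Qed.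

Lemma sqrt_1_minus_sq_le_1 x : sqrt (1 - x ^ 2) <= 1.
Proof. rewrite <- sqrt_1 at 2. apply sqrt_le_1_alt. nra. Qed.

Definition artanh (s : R) : R := (ln (1 + s) - ln (1 - s)) / 2.

Lemma is_derive_artanh x : -1 < x < 1 -> is_derive artanh x (/ (1 - x ^ 2)).
Proof.
  intros Hx. unfold artanh. auto_derive; [repeat split; lra|].
  field. split; [nra|]. lra.
Qed.

Lemma artanh_0 : artanh 0 = 0.
Proof. unfold artanh. rewrite Rplus_0_r, Rminus_0_r. lra. Qed.

Lemma artanh_ge_id s : 0 <= s < 1 -> s <= artanh s.
Proof.
  intros Hs. destruct (Req_dec s 0) as [->|Hs0]; [rewrite artanh_0; lra|].
  destruct (MVT_cor2 (fun x => artanh x - x) (fun x => / (1 - x ^ 2) - 1) 0 s)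
    as [c [Hc Hcs]]; [lra| |].
  - intros c Hc. apply is_derive_Reals.
    apply (is_derive_minus artanh id _ _ 1); [apply is_derive_artanh; lra|].
    apply (is_derive_id c).
  - assert (Hpos : 0 < 1 - c ^ 2 <= 1) by nra.
    assert (1 <= / (1 - c ^ 2)) by (rewrite <- Rinv_1; apply Rinv_le_contravar; lra).
    pose proof artanh_0. nra.
Qed.

Lemma artanh_ge0 s : 0 <= s < 1 -> 0 <= artanh s.
Proof. intros Hs. pose proof (artanh_ge_id s Hs). lra. Qed.

Lemma artanh_le_div_sqrt x : 0 <= x < 1 -> artanh x <= x / sqrt (1 - x ^ 2).
Proof.
  intros Hx. destruct (Req_dec x 0) as [->|Hx0].
  { rewrite artanh_0. unfold Rdiv. lra. }
  destruct (MVT_cor2 (fun y => y / sqrt (1 - y ^ 2) - artanh y)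
              (fun y => / ((1 - y ^ 2) * sqrt (1 - y ^ 2)) - / (1 - y ^ 2)) 0 x)
    as [c [Hc Hcx]]; [lra| |].
  - intros c Hc. apply is_derive_Reals.
    assert (Hc2 : 0 < 1 - c ^ 2) by nra.
    assert (Hqc : 0 < sqrt (1 - c ^ 2)) by (apply sqrt_lt_R0; lra).
    apply (is_derive_minus (fun y => y / sqrt (1 - y ^ 2)) artanh);
      [|apply is_derive_artanh; lra].
    auto_derive; replace (1 + - (c * (c * 1))) with (1 - c ^ 2) by ring;
      [repeat split; lra|].
    set (q := sqrt (1 - c ^ 2)) in *.
    assert (Hqq : q * q = 1 - c ^ 2) by (apply sqrt_sqrt; lra).
    replace (/ ((1 - c ^ 2) * q)) with ((q * q + c ^ 2) / (q * q * q))
      by (rewrite Hqq; field; lra).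
    field. lra.
  - assert (Hc2 : 0 < 1 - c ^ 2 <= 1) by nra.
    assert (Hqc : 0 < sqrt (1 - c ^ 2)) by (apply sqrt_lt_R0; lra).
    pose proof (sqrt_1_minus_sq_le_1 c).
    assert (/ (1 - c ^ 2) <= / ((1 - c ^ 2) * sqrt (1 - c ^ 2))).
    { apply Rinv_le_contravar; [apply Rmult_lt_0_compat; lra|]. nra. }
    pose proof artanh_0. replace (0 / sqrt (1 - 0 ^ 2)) with 0 in Hcx by (unfold Rdiv; ring).
    nra.
Qed.

Definition artanh_ratio (x : R) : R := sqrt (1 - x ^ 2) * artanh x / x.

Lemma artanh_ratio_ge0 x : 0 < x < 1 -> 0 <= artanh_ratio x.
Proof.
  intros Hx. unfold artanh_ratio, Rdiv.
  apply Rmult_le_pos; [apply Rmult_le_pos; [apply sqrt_pos|apply artanh_ge0; lra]|].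
  left; apply Rinv_0_lt_compat; lra.
Qed.

Lemma artanh_ratio_1 : artanh_ratio 1 = 0.
Proof. unfold artanh_ratio. replace (1 - 1 ^ 2) with 0 by ring. rewrite sqrt_0. lra. Qed.

Lemma artanh_ratio_le_1 x : 0 < x < 1 -> artanh_ratio x <= 1.
Proof.
  intros Hx. assert (Hq : 0 < sqrt (1 - x ^ 2)) by (apply sqrt_lt_R0; nra).
  pose proof (artanh_le_div_sqrt x ltac:(lra)) as Hle.
  apply (Rmult_le_compat_l (sqrt (1 - x ^ 2) / x)) in Hle;
    [|unfold Rdiv; apply Rmult_le_pos; [apply sqrt_pos|left; apply Rinv_0_lt_compat; lra]].
  unfold artanh_ratio. replace (sqrt (1 - x ^ 2) / x * (x / sqrt (1 - x ^ 2))) with 1 in Hle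
    by (field; lra).
  replace (sqrt (1 - x ^ 2) * artanh x / x) with (sqrt (1 - x ^ 2) / x * artanh x)
    by (field; lra).
  exact Hle.
Qed.

Lemma artanh_ratio_antitone a b : 0 < a <= b -> b <= 1 ->
  artanh_ratio b <= artanh_ratio a.
Proof.
  intros Hab Hb1.
  destruct (Req_dec a b) as [->|Hne]; [lra|].
  destruct (Req_dec b 1) as [->|Hb]; [rewrite artanh_ratio_1; apply artanh_ratio_ge0; lra|].
  set (sq x := (1 - x ^ 2) * artanh x ^ 2 / x ^ 2).
  (* the derivative of [sq] is [2 artanh s (s - artanh s) / s^3 <= 0] by [artanh_ge_id] *)
  assert (Hsq : sq b <= sq a).
  { destruct (MVT_cor2 sq (fun s => 2 * artanh s * (s - artanh s) / s ^ 3) a b)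
      as [c [Hc Hcab]]; [lra| |].
    - intros c Hc. apply is_derive_Reals. unfold sq, artanh.
      auto_derive; [repeat split; nra|].
      replace (1 + - c) with (1 - c) by ring. field. repeat split; lra.
    - assert (0 <= artanh c) by (apply artanh_ge0; lra).
      assert (c <= artanh c) by (apply artanh_ge_id; lra).
      assert (2 * artanh c * (c - artanh c) / c ^ 3 <= 0).
      { assert (0 < / c ^ 3) by (apply Rinv_0_lt_compat, pow_lt; lra).
        unfold Rdiv. rewrite <- (Rmult_0_l (/ c ^ 3)).
        apply Rmult_le_compat_r; nra. }
      nra. }
  assert (Hsq_eq : forall x, 0 < x < 1 -> sq x = artanh_ratio x ^ 2).
  { intros x Hx. unfold sq, artanh_ratio.
    replace ((sqrt (1 - x ^ 2) * artanh x / x) ^ 2)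
      with (sqrt (1 - x ^ 2) ^ 2 * artanh x ^ 2 / x ^ 2) by (field; lra).
    rewrite pow2_sqrt by nra. reflexivity. }
  rewrite !Hsq_eq in Hsq by lra.
  pose proof (artanh_ratio_ge0 a ltac:(lra)). pose proof (artanh_ratio_ge0 b ltac:(lra)).
  nra.
Qed.

Definition nxlnx (x : R) : R := - (x * ln x).

(* [ln] is [0] on nonpositive arguments in Rocq *)
Lemma nxlnx_nonpos x : x <= 0 -> nxlnx x = 0.
Proof.
  intros Hx. unfold nxlnx, ln. destruct (Rlt_dec 0 x) as [Hpos|_]; [exfalso; lra|ring].
Qed.

Lemma nxlnx_ge0 x : 0 <= x <= 1 -> 0 <= nxlnx x.
Proof.
  intros Hx. destruct (Req_dec x 0) as [->|Hx0]; [rewrite nxlnx_nonpos; lra|].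
  pose proof (exp_ineq1_le (ln x)) as Hexp. rewrite exp_ln in Hexp by lra.
  unfold nxlnx. nra.
Qed.

Lemma nxlnx_le_2sqrt x : 0 < x -> nxlnx x <= 2 * sqrt x.
Proof.
  intros Hx. set (w := sqrt x).
  assert (Hw : 0 < w) by (apply sqrt_lt_R0; lra).
  assert (Hxw : x = w * w) by (unfold w; rewrite sqrt_sqrt; lra).
  (* [ln (1/w) <= 1/w - 1] *)
  pose proof (exp_ineq1_le (ln (/ w))) as Hexp.
  rewrite exp_ln, ln_Rinv in Hexp by (try apply Rinv_0_lt_compat; lra).
  unfold nxlnx. rewrite Hxw, ln_mult by lra.
  apply (Rmult_le_compat_r w) in Hexp; [|lra].
  rewrite Rmult_plus_distr_r, Rinv_l in Hexp by lra. nra.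
Qed.

Lemma continuity_pt_nxlnx_0 : continuity_pt nxlnx 0.
Proof.
  intros eps Heps. set (delta := Rmin ((eps / 2) ^ 2) 1).
  assert (Hd1 : delta <= (eps / 2) ^ 2) by apply Rmin_l.
  assert (Hd2 : delta <= 1) by apply Rmin_r.
  exists delta. split; [apply Rmin_pos; [apply pow_lt|]; lra|].
  intros x [_ Hx]. simpl in Hx |- *. unfold R_dist in *. rewrite Rminus_0_r in Hx.
  rewrite (nxlnx_nonpos 0), Rminus_0_r by lra.
  destruct (Rle_dec x 0) as [Hx0|Hx0]; [rewrite nxlnx_nonpos, Rabs_R0; lra|].
  rewrite Rabs_right in Hx by lra.
  rewrite Rabs_right by (apply Rle_ge, nxlnx_ge0; lra).
  assert (sqrt x < eps / 2).
  { rewrite <- (sqrt_pow2 (eps / 2)) by lra. apply sqrt_lt_1_alt. lra. }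
  pose proof (nxlnx_le_2sqrt x ltac:(lra)). lra.
Qed.

Definition binent (s : R) : R := nxlnx ((1 + s) / 2) + nxlnx ((1 - s) / 2).

Lemma is_derive_binent x : -1 < x < 1 -> is_derive binent x (- artanh x).
Proof.
  intros Hx. unfold binent, nxlnx, artanh. auto_derive; [repeat split; lra|].
  replace (1 + - x) with (1 - x) by ring.
  rewrite !ln_mult, ln_Rinv by (try apply Rinv_0_lt_compat; lra). field. lra.
Qed.

Lemma continuity_pt_binent x : -1 < x <= 1 -> continuity_pt binent x.
Proof.
  intros Hx. destruct (Req_dec x 1) as [->|Hx1].
  2: { eapply continuity_pt_of_is_derive, is_derive_binent; lra. }
  apply continuity_pt_plus.
  - eapply continuity_pt_of_is_derive. unfold nxlnx. auto_derive; [lra|reflexivity].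
  - apply (continuity_pt_comp (fun s => (1 - s) / 2) nxlnx).
    + eapply continuity_pt_of_is_derive. auto_derive; easy.
    + replace ((1 - 1) / 2) with 0 by field. apply continuity_pt_nxlnx_0.
Qed.

Definition tilt (k s : R) : R := binent s - k * sqrt (1 - s ^ 2).

Lemma is_derive_tilt k x : -1 < x < 1 ->
  is_derive (tilt k) x (k * x / sqrt (1 - x ^ 2) - artanh x).
Proof.
  intros Hx. assert (Hq : 0 < sqrt (1 - x ^ 2)) by (apply sqrt_lt_R0; nra).
  assert (Hsq : is_derive (fun s => k * sqrt (1 - s ^ 2)) x (- (k * x / sqrt (1 - x ^ 2)))).
  { auto_derive; replace (1 + - (x * (x * 1))) with (1 - x ^ 2) by ring; [nra|field; lra]. }
  replace (k * x / sqrt (1 - x ^ 2) - artanh x)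
    with (- artanh x - - (k * x / sqrt (1 - x ^ 2))) by ring.
  exact (is_derive_minus _ _ _ _ _ (is_derive_binent x Hx) Hsq).
Qed.

Lemma continuity_pt_tilt k x : 0 <= x <= 1 -> continuity_pt (tilt k) x.
Proof.
  intros Hx. apply continuity_pt_minus; [apply continuity_pt_binent; lra|].
  apply continuity_pt_mult; [apply continuity_pt_const; now intros|].
  apply (continuity_pt_comp (fun s => 1 - s ^ 2) sqrt).
  - eapply continuity_pt_of_is_derive. auto_derive; easy.
  - apply continuity_pt_sqrt. nra.
Qed.

Lemma tilt_min k t s : 0 <= t <= 1 -> 0 <= s <= 1 ->
  (forall x, 0 < x < t -> k <= artanh_ratio x) ->
  (forall x, t < x < 1 -> artanh_ratio x <= k) ->
  tilt k t <= tilt k s.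
Proof.
  intros Ht Hs Hbelow Habove.
  set (dtilt x := k * x / sqrt (1 - x ^ 2) - artanh x).
  assert (Hfactor : forall x, 0 < x < 1 ->
            dtilt x = x / sqrt (1 - x ^ 2) * (k - artanh_ratio x)).
  { intros x Hx. assert (0 < sqrt (1 - x ^ 2)) by (apply sqrt_lt_R0; nra).
    unfold dtilt, artanh_ratio. field. lra. }
  assert (Hslope : forall x, 0 < x < 1 -> 0 < x / sqrt (1 - x ^ 2)).
  { intros x Hx. apply Rdiv_lt_0_compat; [lra|]. apply sqrt_lt_R0. nra. }
  assert (Hder : forall x, 0 < x < 1 -> is_derive (tilt k) x (dtilt x))
    by (intros; apply is_derive_tilt; lra).
  destruct (Rtotal_order s t) as [Hst|[->|Hts]]; [| lra |].
  - destruct (MVT_open (tilt k) dtilt s t Hst) as [c [Hc Hmvt]].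
    + intros; apply Hder; lra.
    + intros; apply continuity_pt_tilt; lra.
    + rewrite Hfactor in Hmvt by lra.
      specialize (Hslope c ltac:(lra)). specialize (Hbelow c ltac:(lra)).
      assert (c / sqrt (1 - c ^ 2) * (k - artanh_ratio c) <= 0) by nra. nra.
  - destruct (MVT_open (tilt k) dtilt t s Hts) as [c [Hc Hmvt]].
    + intros; apply Hder; lra.
    + intros; apply continuity_pt_tilt; lra.
    + rewrite Hfactor in Hmvt by lra.
      specialize (Hslope c ltac:(lra)). specialize (Habove c ltac:(lra)).
      assert (0 <= c / sqrt (1 - c ^ 2) * (k - artanh_ratio c)) by nra. nra.
Qed.

(* In the variable [c = sqrt (1 - s^2)] this is a supporting line of the convex map
   [c |-> binent (sqrt (1 - c^2))]; its slope at [t = 0] is the limit [1] of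
   [artanh_ratio] at [0]. *)
Lemma binent_supporting_line t : 0 <= t <= 1 ->
  exists k, 0 <= k /\ forall s, 0 <= s <= 1 ->
    binent t + k * (sqrt (1 - s ^ 2) - sqrt (1 - t ^ 2)) <= binent s.
Proof.
  intros Ht.
  assert (Hk : exists k, 0 <= k /\ (forall x, 0 < x < t -> k <= artanh_ratio x) /\
                         (forall x, t < x < 1 -> artanh_ratio x <= k)).
  { destruct (Req_dec t 0) as [->|Ht0].
    - exists 1. repeat split; [lra|intros; lra|]. intros; apply artanh_ratio_le_1; lra.
    - exists (artanh_ratio t). repeat split.
      + destruct (Req_dec t 1) as [->|]; [rewrite artanh_ratio_1; lra|].
        apply artanh_ratio_ge0; lra.
      + intros x Hx. apply artanh_ratio_antitone; lra.
      + intros x Hx. apply artanh_ratio_antitone; lra. }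
  destruct Hk as [k [Hk0 [Hbelow Habove]]].
  exists k. split; [exact Hk0|]. intros s Hs.
  pose proof (tilt_min k t s Ht Hs Hbelow Habove). unfold tilt in *. lra.
Qed.

Lemma ln_2_pos : 0 < ln 2.
Proof. rewrite <- ln_1. apply ln_increasing; lra. Qed.

Lemma negxlogx_nxlnx x : negxlogx x = nxlnx x / ln 2.
Proof.
  pose proof ln_2_pos. unfold negxlogx, log2. destruct (Rle_dec x 0).
  - rewrite nxlnx_nonpos by lra. field. lra.
  - unfold nxlnx. field. lra.
Qed.

Lemma h_binent s : h ((1 + s) / 2) = binent s / ln 2.
Proof.
  pose proof ln_2_pos. unfold h, binent. rewrite !negxlogx_nxlnx.
  replace (1 - (1 + s) / 2) with ((1 - s) / 2) by field. field. lra.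
Qed.

Lemma h_1_minus p : h (1 - p) = h p.
Proof. unfold h. replace (1 - (1 - p)) with p by ring. ring. Qed.

(** * Complex numbers and the Bloch matrix *)

Lemma pair_eq (a b c d : R) : a = c -> b = d -> (a, b) = (c, d).
Proof. now intros -> ->. Qed.

Lemma Cnorm_Cmod z : Cnorm z = Complex.Cmod z.
Proof. unfold Cnorm, Cnorm2, Complex.Cmod. f_equal. ring. Qed.

Lemma Cnorm_add_le z w : Cnorm (Cadd z w) <= Cnorm z + Cnorm w.
Proof. rewrite !Cnorm_Cmod. exact (Complex.Cmod_triangle z w). Qed.

Lemma Cnorm_mul z w : Cnorm (Cmul z w) = Cnorm z * Cnorm w.
Proof. rewrite !Cnorm_Cmod. exact (Complex.Cmod_mult z w). Qed.

Lemma Cnorm_conj z : Cnorm (Cconj z) = Cnorm z.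
Proof. rewrite !Cnorm_Cmod. exact (Complex.Cmod_conj z). Qed.

Lemma Cnorm_RtoC p : 0 <= p -> Cnorm (RtoC p) = p.
Proof.
  intros Hp. rewrite Cnorm_Cmod. exact (eq_trans (Complex.Cmod_R p) (Rabs_pos_eq p Hp)).
Qed.

Lemma Cnorm_half x y : Cnorm (x / 2, y / 2) = sqrt (x ^ 2 + y ^ 2) / 2.
Proof.
  unfold Cnorm, Cnorm2; simpl.
  replace (x / 2 * (x / 2) + y / 2 * (y / 2)) with ((x ^ 2 + y ^ 2) / 2 ^ 2) by field.
  rewrite sqrt_div_alt, sqrt_pow2 by (try apply pow_lt; lra). reflexivity.
Qed.

Lemma Cmul_integral z w : Cmul z w = C0 -> z = C0 \/ w = C0.
Proof.
  intros Hzw.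
  assert (Hmod : Complex.Cmod z * Complex.Cmod w = 0).
  { rewrite <- Complex.Cmod_mult. change (Complex.Cmult z w) with (Cmul z w).
    rewrite Hzw. exact Complex.Cmod_0. }
  apply Rmult_integral in Hmod as [Hz|Hw]; [left|right]; now apply Complex.Cmod_eq_0.
Qed.

Lemma Csub_eq0 z w : Csub z w = C0 -> z = w.
Proof.
  destruct z as [a b], w as [c d]. unfold Csub, Cadd, Copp, C0. cbn [fst snd].
  intros H. injection H as Hre Him. apply pair_eq; lra.
Qed.

Lemma monic_quadratic_roots e1 e2 x y :
  (forall lam, Cmul (Csub lam e1) (Csub lam e2) = Cmul (Csub lam x) (Csub lam y)) ->
  (e1 = x /\ e2 = y) \/ (e1 = y /\ e2 = x).
Proof.
  intros Hpoly.
  (* the values at [0] and [1] determine the sum of the roots *)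
  assert (He2 : e2 = Csub (Cadd x y) e1).
  { pose proof (Hpoly C0) as H0. pose proof (Hpoly (1, 0)) as H1.
    destruct e1, e2, x, y. unfold Cmul, Csub, Cadd, Copp, C0 in *. cbn [fst snd] in *.
    injection H0 as H0re H0im. injection H1 as H1re H1im. apply pair_eq; lra. }
  assert (Hroot : Cmul (Csub e1 x) (Csub e1 y) = C0).
  { rewrite <- Hpoly. destruct e1, e2. unfold Cmul, Csub, Cadd, Copp, C0. cbn [fst snd].
    apply pair_eq; ring. }
  rewrite He2. destruct x as [a b], y as [c d].
  apply Cmul_integral in Hroot as [Hx|Hy]; [left|right];
    [apply Csub_eq0 in Hx; subst e1|apply Csub_eq0 in Hy; subst e1];
    unfold Csub, Cadd, Copp; cbn [fst snd]; split; try reflexivity; apply pair_eq; ring.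
Qed.

Definition bloch_mat (nx ny nz : R) (i j : bool) : Cx :=
  match i, j with
  | false, false => ((1 + nz) / 2, 0)
  | false, true => (nx / 2, - ny / 2)
  | true, false => (nx / 2, ny / 2)
  | true, true => ((1 - nz) / 2, 0)
  end.

Lemma bloch_E nx ny nz i j : bloch nx ny nz i j = bloch_mat nx ny nz i j.
Proof.
  destruct i, j; unfold bloch, bloch_mat, mscale, madd, mid, sigma_x, sigma_y, sigma_z,
    RtoC, Cmul, Cadd, Copp, Ci, Defs.C1, C0; simpl; apply pair_eq; field.
Qed.

Lemma Cl1_bloch nx ny nz : Cl1 (bloch nx ny nz) = Cz nx ny nz.
Proof.
  unfold Cl1, Cz. rewrite !bloch_E. cbn [bloch_mat]. rewrite !Cnorm_half.
  replace ((- ny) ^ 2) with (ny ^ 2) by ring. field.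
Qed.

Lemma mmul_sigma_x (A : Mat2) i j : mmul A sigma_x i j = A i (negb j).
Proof.
  unfold mmul, sigma_x. destruct j; cbn [Bool.eqb negb];
    destruct (A i false), (A i true); unfold Cmul, Cadd, C0, Defs.C1; simpl;
    apply pair_eq; ring.
Qed.

Lemma mmul_sigma_x_mmul_sigma_x (A B : Mat2) i j :
  mmul (mmul (mmul A sigma_x) B) sigma_x i j =
  Cadd (Cmul (A i true) (B false (negb j))) (Cmul (A i false) (B true (negb j))).
Proof. rewrite mmul_sigma_x. unfold mmul at 1. now rewrite !mmul_sigma_x. Qed.

Lemma charpoly_bloch_product nx ny nz lam :
  let M := mmul (mmul (mmul (bloch nx ny nz) sigma_x) (mconj (bloch nx ny nz))) sigma_x in
  mdet (madd (mscale lam mid) (mscale (Copp Defs.C1) M)) =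
  (fst lam * fst lam - snd lam * snd lam
     - fst lam * ((1 - nz ^ 2 + nx ^ 2 + ny ^ 2) / 2)
     + ((1 - nz ^ 2 - nx ^ 2 - ny ^ 2) / 4) ^ 2,
   2 * fst lam * snd lam - snd lam * ((1 - nz ^ 2 + nx ^ 2 + ny ^ 2) / 2)).
Proof.
  intros M. destruct lam as [a b].
  unfold mdet, madd, mscale, mid, M. rewrite !mmul_sigma_x_mmul_sigma_x. unfold mconj.
  rewrite !bloch_E. cbn [negb Bool.eqb bloch_mat].
  unfold Csub, Cadd, Copp, Cmul, Cconj, C0, Defs.C1. cbn [fst snd].
  apply pair_eq; field.
Qed.

(* The eigenvalues are [((s + r)/2)^2] and [((s - r)/2)^2] with [r = Cz] and
   [s = sqrt (1 - nz^2)], so their square roots differ by [r]. *)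
Lemma eigenpair_bloch_product nx ny nz eta1 eta2 : nx ^ 2 + ny ^ 2 + nz ^ 2 <= 1 ->
  eigenpair (mmul (mmul (mmul (bloch nx ny nz) sigma_x) (mconj (bloch nx ny nz))) sigma_x)
    eta1 eta2 ->
  Cim eta1 = 0 /\ Cim eta2 = 0 /\ 0 <= Cre eta1 /\ 0 <= Cre eta2 /\
  Cz nx ny nz = Rabs (sqrt (Cre eta1) - sqrt (Cre eta2)).
Proof.
  intros Hn Heig.
  set (r := Cz nx ny nz). set (s := sqrt (1 - nz ^ 2)).
  assert (Hr2 : r ^ 2 = nx ^ 2 + ny ^ 2) by (apply pow2_sqrt; nra).
  assert (Hs2 : s ^ 2 = 1 - nz ^ 2) by (apply pow2_sqrt; nra).
  assert (Hr0 : 0 <= r) by apply sqrt_pos.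
  assert (Hrs : r <= s) by (apply sqrt_le_1_alt; lra).
  set (lp := (((s + r) / 2) ^ 2, 0)). set (lm := (((s - r) / 2) ^ 2, 0)).
  assert (Hpoly : forall lam, Cmul (Csub lam eta1) (Csub lam eta2) =
                              Cmul (Csub lam lp) (Csub lam lm)).
  { intros lam. rewrite <- Heig, charpoly_bloch_product. destruct lam as [a b].
    replace (1 - nz ^ 2 + nx ^ 2 + ny ^ 2) with (s ^ 2 + r ^ 2) by lra.
    replace (1 - nz ^ 2 - nx ^ 2 - ny ^ 2) with (s ^ 2 - r ^ 2) by lra.
    unfold lp, lm, Cmul, Csub, Cadd, Copp; cbn [fst snd]. apply pair_eq; field. }
  assert (Hp : sqrt (fst lp) = (s + r) / 2) by (apply sqrt_pow2; lra).
  assert (Hm : sqrt (fst lm) = (s - r) / 2) by (apply sqrt_pow2; lra).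
  assert (Hlp : 0 <= fst lp) by (apply pow2_ge_0).
  assert (Hlm : 0 <= fst lm) by (apply pow2_ge_0).
  unfold Cre, Cim.
  destruct (monic_quadratic_roots _ _ _ _ Hpoly) as [[-> ->]|[-> ->]];
    rewrite Hp, Hm; repeat split; try assumption; try reflexivity.
  - rewrite Rabs_right; lra.
  - rewrite Rabs_left1; lra.
Qed.

(** * Pure-state decompositions *)

Section WeightedSums.

Context {T : Type}.

Definition total_weight (d : list (R * T)) : R := fold_right (fun e acc => fst e + acc) 0 d.

Definition wsum (f : T -> R) (d : list (R * T)) : R :=
  fold_right (fun e acc => fst e * f (snd e) + acc) 0 d.

Lemma wsum_le f g d : (forall e, In e d -> 0 <= fst e /\ f (snd e) <= g (snd e)) ->
  wsum f d <= wsum g d.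
Proof.
  induction d as [|e d IH]; intros Hle; simpl; [lra|].
  destruct (Hle e (or_introl eq_refl)) as [Hp Hfg].
  pose proof (IH (fun e' He' => Hle e' (or_intror He'))).
  pose proof (Rmult_le_compat_l _ _ _ Hp Hfg). unfold wsum in *. lra.
Qed.

Lemma wsum_affine a b f d :
  wsum (fun x => a + b * f x) d = a * total_weight d + b * wsum f d.
Proof.
  induction d as [|e d IH]; unfold wsum, total_weight in *; simpl; [ring|].
  rewrite IH. ring.
Qed.

Lemma wsum_scal c f d : wsum (fun x => c * f x) d = c * wsum f d.
Proof. induction d as [|e d IH]; unfold wsum in *; simpl; [ring|]. rewrite IH. ring. Qed.

End WeightedSums.

Lemma Cnorm_ens_mat_le d i j : (forall e, In e d -> 0 <= fst e) ->
  Cnorm (ens_mat d i j) <= wsum (fun psi : Vec2 => Cnorm (psi i) * Cnorm (psi j)) d.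
Proof.
  induction d as [|e d IH]; intros Hpos; unfold ens_mat, wsum in *; simpl.
  - change C0 with (RtoC 0). rewrite Cnorm_RtoC; lra.
  - eapply Rle_trans; [apply Cnorm_add_le|].
    rewrite !Cnorm_mul, Cnorm_conj, Cnorm_RtoC by (apply Hpos; now left).
    apply Rplus_le_compat_l, IH. intros; apply Hpos; now right.
Qed.

Definition Cl1_pure (psi : Vec2) : R := 2 * (Cnorm (psi false) * Cnorm (psi true)).

Lemma Cz_le_wsum_Cl1_pure nx ny nz d : is_decomposition (bloch nx ny nz) d ->
  Cz nx ny nz <= wsum Cl1_pure d.
Proof.
  intros [Hpos [_ Hmat]].
  pose proof (Cnorm_ens_mat_le d false true (fun e He => Rlt_le _ _ (proj1 (Hpos e He))))
    as Hle.
  rewrite Hmat, bloch_E in Hle. cbn [bloch_mat] in Hle. rewrite Cnorm_half in Hle.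
  unfold Cl1_pure. rewrite wsum_scal.
  replace ((- ny) ^ 2) with (ny ^ 2) in Hle by ring. unfold Cz. lra.
Qed.

Lemma unit_vec_bias psi : is_unit_vec psi ->
  exists s, 0 <= s <= 1 /\ RI_pure psi = h ((1 + s) / 2) /\ Cl1_pure psi = sqrt (1 - s ^ 2).
Proof.
  unfold is_unit_vec. intros Hunit. set (q := Cnorm2 (psi false)) in *.
  assert (Hq : 0 <= q) by (unfold q, Cnorm2; nra).
  assert (Hq1 : Cnorm2 (psi true) = 1 - q) by lra.
  assert (0 <= Cnorm2 (psi true)) by (unfold Cnorm2; nra).
  exists (Rabs (2 * q - 1)). split; [|split].
  - split; [apply Rabs_pos|]. apply Rabs_le. lra.
  - unfold RI_pure. fold q. rewrite Hq1. change (h q = h ((1 + Rabs (2 * q - 1)) / 2)).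
    destruct (Rle_dec 0 (2 * q - 1)).
    + rewrite Rabs_right by lra. f_equal. field.
    + rewrite Rabs_left by lra. rewrite <- h_1_minus. f_equal. field.
  - unfold Cl1_pure, Cnorm. fold q. rewrite Hq1, pow2_abs.
    replace (1 - (2 * q - 1) ^ 2) with (2 ^ 2 * (q * (1 - q))) by ring.
    rewrite !sqrt_mult, sqrt_pow2 by nra. ring.
Qed.

(* Every pure state lies above the supporting line at the bias [t] of the pure states
   with coherence [Cz], and the average coherence of a decomposition is at least [Cz]. *)
Lemma RI_lower_bound nx ny nz d : nx ^ 2 + ny ^ 2 + nz ^ 2 <= 1 ->
  is_decomposition (bloch nx ny nz) d ->
  h ((1 + sqrt (1 - Cz nx ny nz ^ 2)) / 2) <= avg_RI d.
Proof.
  intros Hn Hd. pose proof ln_2_pos.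
  set (r := Cz nx ny nz). set (t := sqrt (1 - r ^ 2)).
  assert (Hr : 0 <= r <= 1).
  { split; [apply sqrt_pos|].
    assert (r ^ 2 = nx ^ 2 + ny ^ 2) by (apply pow2_sqrt; nra). nra. }
  assert (Ht : 0 <= t <= 1) by (split; [apply sqrt_pos|apply sqrt_1_minus_sq_le_1]).
  assert (Htr : sqrt (1 - t ^ 2) = r).
  { unfold t. rewrite pow2_sqrt by nra. replace (1 - (1 - r ^ 2)) with (r ^ 2) by ring.
    apply sqrt_pow2. lra. }
  destruct (binent_supporting_line t Ht) as [k [Hk Hline]].
  rewrite Htr in Hline. rewrite h_binent.
  pose proof (Cz_le_wsum_Cl1_pure nx ny nz d Hd) as Hcoh. fold r in Hcoh.
  destruct Hd as [Hpos [Hsum _]].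
  assert (Hmin : wsum (fun psi => (binent t - k * r) / ln 2 + k / ln 2 * Cl1_pure psi) d
                 <= avg_RI d).
  { apply wsum_le. intros e He. destruct (Hpos e He) as [Hp Hunit].
    split; [lra|].
    destruct (unit_vec_bias _ Hunit) as [s [Hs [-> ->]]].
    rewrite h_binent. specialize (Hline s Hs).
    apply (Rmult_le_reg_r (ln 2)); [lra|]. field_simplify; [|lra|lra]. lra. }
  rewrite wsum_affine in Hmin. unfold total_weight in Hmin. rewrite Hsum in Hmin.
  assert (k / ln 2 * r <= k / ln 2 * wsum Cl1_pure d).
  { apply Rmult_le_compat_l; [|exact Hcoh].
    unfold Rdiv. apply Rmult_le_pos; [|left; apply Rinv_0_lt_compat]; lra. }
  replace ((binent t - k * r) / ln 2) with (binent t / ln 2 - k / ln 2 * r) in Hmin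
    by (field; lra).
  lra.
Qed.

Definition phase (x y : R) : Cx :=
  if Rlt_dec 0 (sqrt (x ^ 2 + y ^ 2))
  then (x / sqrt (x ^ 2 + y ^ 2), y / sqrt (x ^ 2 + y ^ 2)) else (1, 0).

Lemma phase_spec x y : Cnorm2 (phase x y) = 1 /\
  sqrt (x ^ 2 + y ^ 2) * fst (phase x y) = x /\ sqrt (x ^ 2 + y ^ 2) * snd (phase x y) = y.
Proof.
  assert (Hr2 : sqrt (x ^ 2 + y ^ 2) ^ 2 = x ^ 2 + y ^ 2) by (apply pow2_sqrt; nra).
  unfold phase, Cnorm2. destruct (Rlt_dec 0 (sqrt (x ^ 2 + y ^ 2))) as [Hr|Hr]; cbn [fst snd].
  - repeat split; [|field; lra|field; lra].
    replace (x / sqrt (x ^ 2 + y ^ 2) * (x / sqrt (x ^ 2 + y ^ 2))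
             + y / sqrt (x ^ 2 + y ^ 2) * (y / sqrt (x ^ 2 + y ^ 2)))
      with ((x ^ 2 + y ^ 2) / sqrt (x ^ 2 + y ^ 2) ^ 2) by (field; lra).
    rewrite Hr2. field. nra.
  - assert (sqrt (x ^ 2 + y ^ 2) = 0) by (pose proof (sqrt_pos (x ^ 2 + y ^ 2)); lra).
    assert (x = 0 /\ y = 0) as [-> ->]
      by (apply Rplus_sqr_eq_0; unfold Rsqr; rewrite H in Hr2; lra).
    rewrite H. repeat split; ring.
Qed.

Definition bloch_vec (ux uy uz : R) : Vec2 := fun b =>
  if b then (sqrt ((1 - uz) / 2) * fst (phase ux uy), sqrt ((1 - uz) / 2) * snd (phase ux uy))
  else (sqrt ((1 + uz) / 2), 0).

Lemma bloch_vec_outer ux uy uz i j : ux ^ 2 + uy ^ 2 + uz ^ 2 = 1 ->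
  Cmul (bloch_vec ux uy uz i) (Cconj (bloch_vec ux uy uz j)) = bloch_mat ux uy uz i j.
Proof.
  intros Hu. destruct (phase_spec ux uy) as [Hph [Hx Hy]]. unfold bloch_vec.
  unfold Cnorm2 in Hph. destruct (phase ux uy) as [c s]. cbn [fst snd] in *.
  set (A := sqrt ((1 + uz) / 2)). set (B := sqrt ((1 - uz) / 2)).
  assert (HA : A * A = (1 + uz) / 2) by (apply sqrt_sqrt; nra).
  assert (HB : B * B = (1 - uz) / 2) by (apply sqrt_sqrt; nra).
  assert (HAB : A * B = sqrt (ux ^ 2 + uy ^ 2) / 2).
  { unfold A, B. rewrite <- sqrt_mult by nra.
    replace ((1 + uz) / 2 * ((1 - uz) / 2)) with ((ux ^ 2 + uy ^ 2) / 2 ^ 2) by nra.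
    rewrite sqrt_div_alt, sqrt_pow2 by (try apply pow_lt; lra). reflexivity. }
  destruct i, j; unfold bloch_mat, Cmul, Cconj; cbn [fst snd]; fold A B;
    apply pair_eq; nra.
Qed.

Lemma Cnorm2_bloch_vec ux uy uz : ux ^ 2 + uy ^ 2 + uz ^ 2 = 1 ->
  Cnorm2 (bloch_vec ux uy uz false) = (1 + uz) / 2 /\
  Cnorm2 (bloch_vec ux uy uz true) = (1 - uz) / 2.
Proof.
  intros Hu. assert (Hdiag : forall z, Cnorm2 z = fst (Cmul z (Cconj z)))
    by (intros; unfold Cnorm2, Cmul, Cconj; cbn [fst snd]; ring).
  rewrite !Hdiag, !bloch_vec_outer by exact Hu. now split.
Qed.

Lemma bloch_vec_unit ux uy uz : ux ^ 2 + uy ^ 2 + uz ^ 2 = 1 ->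
  is_unit_vec (bloch_vec ux uy uz).
Proof.
  intros Hu. unfold is_unit_vec. destruct (Cnorm2_bloch_vec _ _ _ Hu) as [-> ->]. field.
Qed.

Lemma RI_pure_bloch_vec ux uy uz : ux ^ 2 + uy ^ 2 + uz ^ 2 = 1 ->
  RI_pure (bloch_vec ux uy uz) = h ((1 + uz) / 2).
Proof.
  intros Hu. unfold RI_pure, h. destruct (Cnorm2_bloch_vec _ _ _ Hu) as [-> ->].
  f_equal. f_equal. field.
Qed.

Lemma bloch_decomposition_pure ux uy uz : ux ^ 2 + uy ^ 2 + uz ^ 2 = 1 ->
  is_decomposition (bloch ux uy uz) ((1, bloch_vec ux uy uz) :: nil).
Proof.
  intros Hu. split; [|split].
  - intros e [<-|[]]. split; [simpl; lra|apply bloch_vec_unit; exact Hu].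
  - simpl. ring.
  - intros i j. unfold ens_mat. cbn [fold_right fst snd].
    rewrite bloch_vec_outer, bloch_E by exact Hu.
    destruct i, j; unfold bloch_mat, RtoC, Cmul, Cadd, C0; cbn [fst snd];
      apply pair_eq; ring.
Qed.

Lemma bloch_decomposition_z_split nx ny nz t :
  nx ^ 2 + ny ^ 2 + t ^ 2 = 1 -> - t < nz < t ->
  is_decomposition (bloch nx ny nz)
    (((1 + nz / t) / 2, bloch_vec nx ny t) :: (1 - (1 + nz / t) / 2, bloch_vec nx ny (- t))
       :: nil).
Proof.
  intros Hu Hnz.
  assert (Hdown : nx ^ 2 + ny ^ 2 + (- t) ^ 2 = 1) by lra.
  assert (-1 < nz / t < 1).
  { unfold Rdiv. split; apply (Rmult_lt_reg_r t); try lra;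
      rewrite Rmult_assoc, Rinv_l by lra; lra. }
  split; [|split].
  - intros e [<-|[<-|[]]]; cbn [fst snd]; (split; [lra|apply bloch_vec_unit; assumption]).
  - simpl. ring.
  - intros i j. unfold ens_mat. cbn [fold_right fst snd].
    rewrite !bloch_vec_outer, bloch_E by assumption.
    destruct i, j; unfold bloch_mat, RtoC, Cmul, Cadd, C0; cbn [fst snd];
      apply pair_eq; field; lra.
Qed.

(* A mixed state is split along the [z] axis between the two pure states with the same
   transverse components [(nx, ny)]; both have bias [t = sqrt (1 - Cz^2)]. *)
Lemma RI_upper_bound nx ny nz : nx ^ 2 + ny ^ 2 + nz ^ 2 <= 1 ->
  exists d, is_decomposition (bloch nx ny nz) d /\
    avg_RI d = h ((1 + sqrt (1 - Cz nx ny nz ^ 2)) / 2).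
Proof.
  intros Hn.
  assert (Hr2 : Cz nx ny nz ^ 2 = nx ^ 2 + ny ^ 2) by (apply pow2_sqrt; nra).
  rewrite Hr2. set (t := sqrt (1 - (nx ^ 2 + ny ^ 2))).
  assert (Ht2 : t ^ 2 = 1 - (nx ^ 2 + ny ^ 2)) by (apply pow2_sqrt; nra).
  assert (Ht0 : 0 <= t) by apply sqrt_pos.
  destruct (Req_dec (nx ^ 2 + ny ^ 2 + nz ^ 2) 1) as [Hpure|Hmixed].
  - eexists; split; [exact (bloch_decomposition_pure nx ny nz Hpure)|].
    unfold avg_RI. cbn [fold_right fst snd]. rewrite RI_pure_bloch_vec by exact Hpure.
    assert (Habs : t = Rabs nz)
      by (unfold t; rewrite <- sqrt_Rsqr_abs; f_equal; unfold Rsqr; lra).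
    rewrite Habs. destruct (Rle_dec 0 nz).
    + rewrite Rabs_right by lra. ring.
    + rewrite Rabs_left, <- (h_1_minus ((1 + - nz) / 2)) by lra.
      replace (1 - (1 + - nz) / 2) with ((1 + nz) / 2) by field. ring.
  - assert (Hup : nx ^ 2 + ny ^ 2 + t ^ 2 = 1) by lra.
    eexists; split; [apply (bloch_decomposition_z_split nx ny nz t Hup); split; nra|].
    unfold avg_RI. cbn [fold_right fst snd]. rewrite !RI_pure_bloch_vec by lra.
    rewrite <- (h_1_minus ((1 + - t) / 2)).
    replace (1 - (1 + - t) / 2) with ((1 + t) / 2) by field. ring.
Qed.

Theorem mainTheorem7 (nx ny nz : R) (Hn : nx ^ 2 + ny ^ 2 + nz ^ 2 <= 1) :
  RI_is (bloch nx ny nz) (h ((1 + sqrt (1 - (Cz nx ny nz) ^ 2)) / 2)) /\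
  (forall eta1 eta2 : Cx,
     eigenpair (mmul (mmul (mmul (bloch nx ny nz) sigma_x) (mconj (bloch nx ny nz))) sigma_x)
               eta1 eta2 ->
     Cim eta1 = 0 /\ Cim eta2 = 0 /\ 0 <= Cre eta1 /\ 0 <= Cre eta2 /\
     Cz nx ny nz = Rabs (sqrt (Cre eta1) - sqrt (Cre eta2))) /\
  Cz nx ny nz = Cl1 (bloch nx ny nz).
Proof.
  split; [|split].
  - split; [now apply RI_upper_bound|].
    intros d Hd. now apply RI_lower_bound.
  - intros eta1 eta2. now apply eigenpair_bloch_product.
  - symmetry. apply Cl1_bloch.
Qed.
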